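(* Let $X$ have the $\Gamma(\alpha,1)$ distribution (density $x^{\alpha-1}e^{-x}/(\alpha-1)!$, $x\geq0$) with integer shape parameter $\alpha\geq 2$. For every integer $s\geq 2$, the tail of the $s$-iterated distribution induced by $X$ is $$\overline{T}_{X,s}(x)=e^{-x}+\frac{e^{-x}}{\binom{\alpha+s-2}{\alpha-1}}\sum_{\ell=1}^{\alpha-1}\binom{s+\alpha-\ell-2}{\alpha-\ell-1}\frac{x^\ell}{\ell!},\qquad x\geq 0.$$
   Context: For a nonnegative absolutely continuous random variable $X$ with density $f_X$, set $\overline{T}_{X,0}=f_X$, $\mu_{X,0}=1$, and for integers $s\geq 1$ define recursively $\overline{T}_{X,s}(x)=\frac{1}{\mu_{X,s-1}}\int_x^\infty\overline{T}_{X,s-1}(t)\,dt$ and $\mu_{X,s}=\int_0^\infty\overline{T}_{X,s}(t)\,dt$. $\overline{T}_{X,s}$ is the tail (survival function) of the $s$-iterated distribution induced by $X$. *)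

From Stdlib Require Import Reals Factorial.
From Coquelicot Require Import Coquelicot.
Open Scope R_scope.

Definition int_from (g : R -> R) (a : R) : R :=
  RInt_gen g (at_point a) (Rbar_locally p_infty).

Fixpoint iter_tail_mu (f : R -> R) (s : nat) : (R -> R) * R :=
  match s with
  | O => (f, 1)
  | S s' =>
      let '(T, mu) := iter_tail_mu f s' in
      let T' := fun x => / mu * int_from T x in
      (T', int_from T' 0)
  end.

Definition iter_tail (f : R -> R) (s : nat) : R -> R := fst (iter_tail_mu f s).
Definition iter_mu (f : R -> R) (s : nat) : R := snd (iter_tail_mu f s).

Definition gamma_density (alpha : nat) (x : R) : R :=
  if Rle_dec 0 x then x ^ (alpha - 1) * exp (- x) / INR (fact (alpha - 1)) else 0.

From Stdlib Require Import Reals Factorial Lia Lra.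
From Coquelicot Require Import Coquelicot.
Open Scope R_scope.

(* Write [T_s(x) = e^{-x} P(x)] with [P] a polynomial of degree [n = alpha - 1] in
   the basis [x^k / k!].  Since [(- e^{-x} sum_k c_k x^k/k!)' = e^{-x} sum_k (c_k - c_{k+1}) x^k/k!],
   the tail integral of [e^{-t} sum_k a_k t^k/k!] over [[x, oo)] is [e^{-x} sum_k A_k x^k/k!]
   with [A_k = sum_{i >= k} a_i]: one iteration replaces the coefficients by their tail sums and
   divides by the value at [0], i.e. by [A_0].  The Gamma density has the single coefficient
   [a_n = 1], and the hockey-stick identity
   [sum_{i >= k} C(j+n-i, n-i) = C(j+1+n-k, n-k)] shows by induction that the coefficients of
   [T_{j+1}] are [C(j+n-k, n-k) / C(j+n, n)]. *)

Lemma pow_div_fact_le_exp t k : 0 <= t -> t ^ k / INR (fact k) <= exp t.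
Proof.
  intros Ht. destruct k as [|k]; [exact (exp_ge_taylor t 0 Ht)|].
  apply Rle_trans with (2 := exp_ge_taylor t (S k) Ht). rewrite tech5.
  enough (0 <= sum_f_R0 (fun i => t ^ i / INR (fact i)) k) by lra.
  apply cond_pos_sum; intros i. apply Rdiv_le_0_compat; [apply pow_le; lra | apply INR_fact_lt_0].
Qed.

Lemma exp_neg_mul_pow_le t k : 0 < t -> exp (- t) * t ^ k <= INR (fact (S k)) / t.
Proof.
  intros Ht. pose proof (exp_pos t) as Het. pose proof (INR_fact_lt_0 (S k)) as Hf.
  rewrite exp_Ropp.
  replace (/ exp t * t ^ k) with (t ^ S k / INR (fact (S k)) * (INR (fact (S k)) / (t * exp t)))
    by (change (t ^ S k) with (t * t ^ k); field; lra).
  replace (INR (fact (S k)) / t) with (exp t * (INR (fact (S k)) / (t * exp t))) by (field; lra).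
  apply Rmult_le_compat_r; [apply Rlt_le, Rdiv_lt_0_compat, Rmult_lt_0_compat; lra |].
  apply pow_div_fact_le_exp; lra.
Qed.

Lemma is_lim_exp_neg_mul_pow k : is_lim (fun t => exp (- t) * t ^ k) p_infty 0.
Proof.
  apply is_lim_le_le_loc with (f := fun _ => 0) (g := fun t => INR (fact (S k)) / t).
  - exists 0; intros t Ht. split.
    + apply Rmult_le_pos; [apply Rlt_le, exp_pos | apply pow_le; lra].
    + apply exp_neg_mul_pow_le; lra.
  - apply is_lim_const.
  - replace (Finite 0) with (Rbar_mult (INR (fact (S k))) (Rbar_inv p_infty))
      by (simpl; f_equal; ring).
    apply is_lim_scal_l, is_lim_inv; [apply is_lim_id | discriminate].
Qed.

Lemma is_lim_scal_exp_neg_mul_pow c k :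
  is_lim (fun t => c * (exp (- t) * t ^ k)) p_infty 0.
Proof.
  replace (Finite 0) with (Rbar_mult c 0) by (simpl; f_equal; ring).
  apply is_lim_scal_l, is_lim_exp_neg_mul_pow.
Qed.

Lemma sum_n_m_Rmult_l (c : R) (u : nat -> R) m l :
  sum_n_m (fun k => c * u k) m l = c * sum_n_m u m l.
Proof. exact (sum_n_m_mult_l c u m l). Qed.

Lemma C_pos n k : 0 < Binomial.C n k.
Proof.
  unfold Binomial.C. apply Rdiv_lt_0_compat; [apply INR_fact_lt_0|].
  apply Rmult_lt_0_compat; apply INR_fact_lt_0.
Qed.

Lemma sum_C_hockey_stick n j k : (k <= n)%nat ->
  sum_n_m (fun i => Binomial.C (j + n - i) (n - i)) k n = Binomial.C (S j + n - k) (n - k).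
Proof.
  intros Hk. remember (n - k)%nat as p eqn:Hp. revert k Hk Hp.
  induction p as [|p IH]; intros k Hk Hp.
  - replace k with n by lia. rewrite sum_n_n, Nat.sub_diag, !C_n_0. reflexivity.
  - rewrite sum_Sn_m, (IH (S k)) by lia.
    replace (S j + n - S k)%nat with (j + n - k)%nat by lia.
    replace (S j + n - k)%nat with (S (j + n - k)) by lia.
    replace (n - S k)%nat with p by lia.
    rewrite <- Hp, <- pascal by lia. unfold plus. simpl. apply Rplus_comm.
Qed.

Definition fpoly (b : nat -> R) (n : nat) (x : R) : R :=
  sum_n_m (fun k => b k * x ^ k / INR (fact k)) 0 n.

Definition exp_fpoly (b : nat -> R) (n : nat) (x : R) : R := exp (- x) * fpoly b n x.

Lemma fpoly_0 b x : fpoly b 0 x = b 0%nat.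
Proof. unfold fpoly. rewrite sum_n_n. simpl. field. Qed.

Lemma fpoly_S b n x :
  fpoly b (S n) x = fpoly b n x + b (S n) * x ^ S n / INR (fact (S n)).
Proof. unfold fpoly. rewrite sum_n_Sm by lia. reflexivity. Qed.

Lemma fpoly_split_0 b n x :
  fpoly b n x = b 0%nat + sum_n_m (fun k => b k * x ^ k / INR (fact k)) 1 n.
Proof. unfold fpoly. rewrite sum_Sn_m by lia. unfold plus. simpl. field. Qed.

Lemma fpoly_ext b b' n x :
  (forall k, (k <= n)%nat -> b k = b' k) -> fpoly b n x = fpoly b' n x.
Proof.
  intros Hb. apply sum_n_m_ext_loc. intros k Hk. rewrite Hb by lia. reflexivity.
Qed.

Lemma fpoly_scal c b n x : c * fpoly b n x = fpoly (fun k => c * b k) n x.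
Proof.
  induction n as [|n IH].
  - rewrite !fpoly_0. reflexivity.
  - rewrite !fpoly_S, <- IH. field. apply INR_fact_neq_0.
Qed.

Lemma fpoly_sub b b' n x :
  fpoly b n x - fpoly b' n x = fpoly (fun k => b k - b' k) n x.
Proof.
  induction n as [|n IH].
  - rewrite !fpoly_0. reflexivity.
  - rewrite !fpoly_S, <- IH. field. apply INR_fact_neq_0.
Qed.

Lemma fpoly_zero n x : fpoly (fun _ => 0) n x = 0.
Proof.
  induction n as [|n IH].
  - apply fpoly_0.
  - rewrite fpoly_S, IH. unfold Rdiv. ring.
Qed.

Lemma fpoly_at_0 b n : fpoly b n 0 = b 0%nat.
Proof.
  induction n as [|n IH].
  - apply fpoly_0.
  - rewrite fpoly_S, IH, pow_i by lia. field. apply INR_fact_neq_0.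
Qed.

Lemma is_derive_pow_div_fact k x :
  is_derive (fun y => y ^ S k / INR (fact (S k))) x (x ^ k / INR (fact k)).
Proof.
  auto_derive; [easy|].
  change (match k with 0%nat => 1 | S _ => INR k + 1 end) with (INR (S k)).
  replace (fact k + k * fact k)%nat with (S k * fact k)%nat by lia.
  rewrite mult_INR.
  pose proof (INR_fact_lt_0 k). pose proof (lt_0_INR (S k) (Nat.lt_0_succ k)).
  field. lra.
Qed.

Lemma is_derive_fpoly b n x :
  is_derive (fpoly b n) x
    (fpoly (fun k => b (S k)) n x - b (S n) * x ^ n / INR (fact n)).
Proof.
  induction n as [|n IH].
  - apply is_derive_ext with (f := fun _ => b 0%nat); [intros t; symmetry; apply fpoly_0|].
    rewrite fpoly_0. replace (b 1%nat - b 1%nat * x ^ 0 / INR (fact 0)) with 0 by (simpl; field).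
    exact (is_derive_const (b 0%nat) x).
  - apply is_derive_ext with
      (f := fun y => fpoly b n y + b (S n) * (y ^ S n / INR (fact (S n)))).
    { intros t. rewrite fpoly_S. unfold Rdiv. rewrite Rmult_assoc. reflexivity. }
    replace (fpoly (fun k => b (S k)) (S n) x - b (S (S n)) * x ^ S n / INR (fact (S n)))
      with (fpoly (fun k => b (S k)) n x - b (S n) * x ^ n / INR (fact n)
            + b (S n) * (x ^ n / INR (fact n)))
      by (rewrite fpoly_S; unfold Rdiv; ring).
    apply (is_derive_plus (fpoly b n)); [exact IH|].
    apply (is_derive_scal (fun y => y ^ S n / INR (fact (S n)))), is_derive_pow_div_fact.
Qed.

Lemma ex_derive_exp_fpoly b n x : ex_derive (exp_fpoly b n) x.
Proof.
  apply (ex_derive_mult (fun t => exp (- t)) (fpoly b n)).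
  - auto_derive. easy.
  - eexists. apply is_derive_fpoly.
Qed.

Lemma is_lim_exp_fpoly b n : is_lim (exp_fpoly b n) p_infty 0.
Proof.
  induction n as [|n IH].
  - apply is_lim_ext with (f := fun t => b 0%nat * (exp (- t) * t ^ 0)).
    { intros t. unfold exp_fpoly. rewrite fpoly_0. simpl. ring. }
    apply is_lim_scal_exp_neg_mul_pow.
  - apply is_lim_ext with (f := fun t =>
      exp_fpoly b n t + b (S n) / INR (fact (S n)) * (exp (- t) * t ^ S n)).
    { intros t. unfold exp_fpoly. rewrite fpoly_S. unfold Rdiv. ring. }
    replace (Finite 0) with (Finite (0 + 0)) by (f_equal; ring).
    apply is_lim_plus'; [exact IH | apply is_lim_scal_exp_neg_mul_pow].
Qed.

Definition tail_sum (a : nat -> R) (n k : nat) : R := sum_n_m a k n.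

Lemma tail_sum_S a n k : (k <= n)%nat -> tail_sum a n k = a k + tail_sum a n (S k).
Proof. intros Hk. unfold tail_sum. rewrite sum_Sn_m by exact Hk. reflexivity. Qed.

Lemma tail_sum_empty a n : tail_sum a n (S n) = 0.
Proof. unfold tail_sum. rewrite sum_n_m_zero by lia. reflexivity. Qed.

Lemma is_derive_exp_fpoly_tail_sum a n x :
  is_derive (fun t => - exp_fpoly (tail_sum a n) n t) x (exp_fpoly a n x).
Proof.
  set (c := tail_sum a n).
  assert (Hdiff : fpoly c n x - fpoly (fun k => c (S k)) n x = fpoly a n x).
  { rewrite fpoly_sub. apply fpoly_ext. intros k Hk. unfold c. rewrite tail_sum_S by lia. ring. }
  assert (Hexp : is_derive (fun t => - exp (- t)) x (exp (- x))) by (auto_derive; [easy | ring]).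
  apply is_derive_ext with (f := fun t => - exp (- t) * fpoly c n t).
  { intros t. symmetry. apply Ropp_mult_distr_l. }
  replace (exp_fpoly a n x) with (exp (- x) * fpoly c n x
    + - exp (- x) * (fpoly (fun k => c (S k)) n x - c (S n) * x ^ n / INR (fact n))).
  - apply (is_derive_mult (fun t => - exp (- t)) (fpoly c n)).
    + exact Hexp.
    + apply is_derive_fpoly.
    + intros; apply Rmult_comm.
  - unfold exp_fpoly. rewrite <- Hdiff.
    replace (c (S n)) with 0 by (symmetry; apply tail_sum_empty).
    field. apply INR_fact_neq_0.
Qed.

Lemma int_from_exp_fpoly a n g y :
  (forall t, y <= t -> g t = exp_fpoly a n t) ->
  int_from g y = exp_fpoly (tail_sum a n) n y.
Proof.
  intros Hg.
  set (F := fun t => - exp_fpoly (tail_sum a n) n t).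
  assert (HF : forall t, Derive F t = exp_fpoly a n t)
    by (intros t; apply is_derive_unique, is_derive_exp_fpoly_tail_sum).
  assert (Hint : is_RInt_gen (Derive F) (at_point y) (Rbar_locally p_infty) (0 - F y)).
  { apply is_RInt_gen_Derive.
    - apply filter_forall. intros _ t _. eexists. apply is_derive_exp_fpoly_tail_sum.
    - apply filter_forall. intros _ t _.
      apply continuous_ext with (f := exp_fpoly a n); [intros u; symmetry; apply HF|].
      apply (ex_derive_continuous (K := R_AbsRing) (V := R_NormedModule)), ex_derive_exp_fpoly.
    - intros P HP. exact (locally_singleton _ _ HP).
    - pose proof (is_lim_opp _ _ _ (is_lim_exp_fpoly (tail_sum a n) n)) as Hlim.
      simpl in Hlim. rewrite Ropp_0 in Hlim. exact Hlim. }
  apply is_RInt_gen_ext with (g := g) in Hint.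
  - unfold int_from. rewrite (is_RInt_gen_unique _ _ Hint). unfold F. ring.
  - exists (fun u => u = y) (fun v => y < v); [reflexivity | exists y; auto |].
    intros u v Hu Hv t Ht. simpl in *. subst u.
    rewrite Rmin_left in Ht by lra. rewrite HF, Hg by lra. reflexivity.
Qed.

Definition iter_coef (n j k : nat) : R :=
  Binomial.C (j + n - k) (n - k) / Binomial.C (j + n) n.

Lemma iter_coef_0 n j : iter_coef n j 0 = 1.
Proof.
  unfold iter_coef. rewrite !Nat.sub_0_r. apply Rdiv_diag, Rgt_not_eq, C_pos.
Qed.

Lemma tail_sum_iter_coef n j k : (k <= n)%nat ->
  tail_sum (iter_coef n j) n k
  = iter_coef n (S j) k * (Binomial.C (S j + n) n / Binomial.C (j + n) n).
Proof.
  intros Hk. unfold tail_sum, iter_coef.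
  rewrite (sum_n_m_ext _ (fun i => / Binomial.C (j + n) n * Binomial.C (j + n - i) (n - i)))
    by (intros i; apply Rmult_comm).
  rewrite sum_n_m_Rmult_l, sum_C_hockey_stick by exact Hk.
  pose proof (C_pos (j + n) n). pose proof (C_pos (S j + n) n). field. lra.
Qed.

Definition indicator (n k : nat) : R := if (k =? n)%nat then 1 else 0.

Lemma fpoly_indicator n x : fpoly (indicator n) n x = x ^ n / INR (fact n).
Proof.
  unfold indicator. destruct n as [|n].
  - rewrite fpoly_0. simpl. field.
  - rewrite fpoly_S, Nat.eqb_refl, (fpoly_ext _ (fun _ => 0)), fpoly_zero.
    + unfold Rdiv. ring.
    + intros k Hk. destruct (Nat.eqb_spec k (S n)); [lia | reflexivity].
Qed.

Lemma tail_sum_indicator n k : (k <= n)%nat -> tail_sum (indicator n) n k = 1.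
Proof.
  intros Hk. remember (n - k)%nat as p eqn:Hp. revert k Hk Hp.
  induction p as [|p IH]; intros k Hk Hp.
  - replace k with n by lia. unfold tail_sum, indicator. rewrite sum_n_n, Nat.eqb_refl. reflexivity.
  - rewrite tail_sum_S, (IH (S k)) by lia. unfold indicator.
    destruct (Nat.eqb_spec k n); [lia | ring].
Qed.

Lemma gamma_density_exp_fpoly n t :
  0 <= t -> gamma_density (S n) t = exp_fpoly (indicator n) n t.
Proof.
  intros Ht. unfold gamma_density, exp_fpoly. rewrite fpoly_indicator.
  destruct (Rle_dec 0 t) as [_|]; [|lra].
  replace (S n - 1)%nat with n by lia. unfold Rdiv. ring.
Qed.

Lemma iter_tail_S f s x : iter_tail f (S s) x = / iter_mu f s * int_from (iter_tail f s) x.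
Proof. unfold iter_tail, iter_mu. simpl. destruct (iter_tail_mu f s). reflexivity. Qed.

Lemma iter_mu_S f s : iter_mu f (S s) = int_from (iter_tail f (S s)) 0.
Proof. unfold iter_tail, iter_mu. simpl. destruct (iter_tail_mu f s). reflexivity. Qed.

Lemma iter_tail_gamma_density n j x : 0 <= x ->
  iter_tail (gamma_density (S n)) (S j) x = exp_fpoly (iter_coef n j) n x.
Proof.
  revert x. induction j as [|j IH]; intros x Hx.
  - rewrite iter_tail_S. change (iter_mu (gamma_density (S n)) 0) with 1.
    rewrite Rinv_1, Rmult_1_l, (int_from_exp_fpoly (indicator n) n)
      by (intros t Ht; apply gamma_density_exp_fpoly; lra).
    unfold exp_fpoly. f_equal. apply fpoly_ext. intros k Hk.
    rewrite tail_sum_indicator by exact Hk.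
    unfold iter_coef. rewrite Nat.add_0_l, !C_n_n. field.
  - assert (Hint : forall y, 0 <= y ->
      int_from (iter_tail (gamma_density (S n)) (S j)) y
      = exp_fpoly (tail_sum (iter_coef n j) n) n y).
    { intros y Hy. apply int_from_exp_fpoly. intros t Ht. apply IH. lra. }
    set (r := Binomial.C (S j + n) n / Binomial.C (j + n) n).
    assert (Hr : 0 < r) by (apply Rdiv_lt_0_compat; apply C_pos).
    assert (Htail : forall k, (k <= n)%nat -> tail_sum (iter_coef n j) n k = r * iter_coef n (S j) k).
    { intros k Hk. rewrite tail_sum_iter_coef by exact Hk. apply Rmult_comm. }
    rewrite iter_tail_S, iter_mu_S, !Hint by lra.
    unfold exp_fpoly. rewrite fpoly_at_0, Htail, iter_coef_0, Ropp_0, exp_0 by lia.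
    rewrite (fpoly_ext _ (fun k => r * iter_coef n (S j) k)) by exact Htail.
    rewrite <- fpoly_scal. field. lra.
Qed.

Theorem theorem3 (alpha s : nat) (x : R) :
  (2 <= alpha)%nat -> (2 <= s)%nat -> 0 <= x ->
  iter_tail (gamma_density alpha) s x =
    exp (- x)
    + exp (- x) / Binomial.C (alpha + s - 2) (alpha - 1)
      * sum_n_m (fun l => Binomial.C (s + alpha - l - 2) (alpha - l - 1)
                          * x ^ l / INR (fact l)) 1 (alpha - 1).
Proof.
  intros Ha Hs Hx.
  destruct alpha as [|n]; [lia|]. destruct s as [|j]; [lia|].
  rewrite iter_tail_gamma_density by exact Hx.
  replace (S n + S j - 2)%nat with (j + n)%nat by lia.
  replace (S n - 1)%nat with n by lia.
  unfold exp_fpoly. rewrite fpoly_split_0, iter_coef_0.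
  pose proof (C_pos (j + n) n).
  assert (Hcoef : forall l, (1 <= l <= n)%nat ->
    iter_coef n j l * x ^ l / INR (fact l)
    = / Binomial.C (j + n) n
      * (Binomial.C (S j + S n - l - 2) (S n - l - 1) * x ^ l / INR (fact l))).
  { intros l Hl. unfold iter_coef.
    replace (S j + S n - l - 2)%nat with (j + n - l)%nat by lia.
    replace (S n - l - 1)%nat with (n - l)%nat by lia.
    field. split; [apply INR_fact_neq_0 | lra]. }
  rewrite (sum_n_m_ext_loc _ _ _ _ Hcoef), sum_n_m_Rmult_l.
  field. lra.
Qed.
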